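(* Let $n\geqslant 2$ and $d\geqslant 1$ be integers. Let $\mathfrak{ut}_n(\mathbb{C})$ be the Lie algebra of upper triangular complex $n\times n$ matrices with basis $\{E_{ij}\mid 1\leqslant i\leqslant j\leqslant n\}$, and assign the variable $x_i$ to $E_{ii}$ ($1\leqslant i\leqslant n$) and the variable $x_{ij}$ to $E_{ij}$ ($1\leqslant i<j\leqslant n$). Then the coefficient algebra of $\mathfrak{ut}_n(\mathbb{C})$ on $S^d(\mathbb{C}^n)$ with respect to this basis, a subalgebra of $\mathbb{C}[x_i,x_{ij}]$, is equal to the ring of symmetric polynomials $\mathbb{C}[x_1,\dots,x_n]^{S_n}$ in the diagonal variables, where $S_n$ permutes $x_1,\dots,x_n$. In particular it is isomorphic to $\mathbb{C}[x_1,\dots,x_n]^{S_n}$.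
   Context: Let $\mathfrak{g}$ be a finite-dimensional Lie algebra over a field $k$ with a fixed basis $\{g_1,\dots,g_N\}$, and $V$ an $m$-dimensional representation; write $[g]$ for the matrix of $g\in\mathfrak g$ acting on $V$ (in any basis of $V$). The characteristic polynomial of $\mathfrak g$ on $V$ is $\varphi_{\mathfrak g}(V)=\det(x_0 I+x_1[g_1]+\cdots+x_N[g_N])$, a polynomial in variables $x_0,\dots,x_N$ (one variable $x_0$ for the identity and one for each basis element). Writing $\varphi_{\mathfrak g}(V)=x_0^m+c_1x_0^{m-1}+\cdots+c_m$ with $c_i\in k[x_1,\dots,x_N]$, the coefficient algebra $B_{\mathfrak g}(V)$ is the $k$-subalgebra $k[c_1,\dots,c_m]$ of $k[x_1,\dots,x_N]$. Here $E_{ij}$ is the matrix unit with $1$ in position $(i,j)$ and $0$ elsewhere. $\mathbb{C}^n$ is the standard representation of $\mathfrak{gl}_n(\mathbb{C})$ (and of its subalgebras) with standard basis $e_1,\dots,e_n$, and $S^d(\mathbb{C}^n)$ is its $d$-th symmetric power, on which $g$ acts as a derivation: $g\cdot(e_{i_1}\cdots e_{i_d})=\sum_{s=1}^d e_{i_1}\cdots g(e_{i_s})\cdots e_{i_d}$. *)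

From HB Require Import structures.
From mathcomp Require Import all_boot all_order all_algebra.
From mathcomp Require Import mpoly.
Set Implicit Arguments. Unset Strict Implicit. Unset Printing Implicit Defensive.
Import GRing.Theory.
Local Open Scope ring_scope.

Section Defs.
Variable C : numClosedFieldType.

(* A Lie algebra with basis given as matrices B k (k < N) acting on an
   m-dimensional representation.  Variables x_1..x_N are 'X_k of
   {mpoly C[N]}; the extra variable x_0 is the variable 'X of the outer
   univariate polynomial ring, so
   phi = det(x_0 I + sum_k x_k [B k]) in (C[x_1..x_N])[x_0]. *)
Definition lie_charpoly (m N : nat) (B : 'I_N -> 'M[C]_m) : {poly {mpoly C[N]}} :=
  \det ('X%:M + map_mx polyC
          (\sum_(k < N) 'X_k *: map_mx (fun c : C => c%:MP) (B k))).

(* c_i = coefficient of x_0^(m-i), for i = 1..m; index i : 'I_m stands for i+1 *)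
Definition lie_coeffs (m N : nat) (B : 'I_N -> 'M[C]_m) : m.-tuple {mpoly C[N]} :=
  [tuple (lie_charpoly B)`_((m - i.+1)%N) | i < m].

Definition coeff_algebra (m N : nat) (B : 'I_N -> 'M[C]_m) : {mpoly C[N]} -> Prop :=
  fun p => exists P : {mpoly C[m]}, p = comp_mpoly (lie_coeffs B) P.

(* S^d(C^n) realised as homogeneous degree-d polynomials in e_1..e_n
   ('X_i of {mpoly C[n]}), with basis the monomials of degree d. *)
Notation Sd_index n d := {mo : 'X_{1..n < d.+1} | (mdeg mo == d)%N}.
Definition Sd_dim (n d : nat) := #|{: Sd_index n d}|.

(* g acts as the derivation with g(e_l) = sum_k g_{kl} e_k *)
Definition Sd_act (n : nat) (g : 'M[C]_n) (p : {mpoly C[n]}) : {mpoly C[n]} :=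
  \sum_(k < n) \sum_(l < n) g k l *: ('X_k * p^`M(l)).

Definition Sd_mx (n d : nat) (g : 'M[C]_n) : 'M[C]_(Sd_dim n d) :=
  \matrix_(a < Sd_dim n d, b < Sd_dim n d)
     (Sd_act g 'X_[(val (@enum_val _ (mem {: Sd_index n d}) b) : 'X_{1..n})])
        @_(val (@enum_val _ (mem {: Sd_index n d}) a) : 'X_{1..n}).

Notation UT_index n := {ij : 'I_n * 'I_n | (ij.1 <= ij.2)%N}.
Definition UT_dim (n : nat) := #|{: UT_index n}|.

Definition UT_basis (n : nat) (k : 'I_(UT_dim n)) : 'M[C]_n :=
  delta_mx (val (@enum_val _ (mem {: UT_index n}) k)).1 (val (@enum_val _ (mem {: UT_index n}) k)).2.

Definition UT_diagvar (n : nat) (i : 'I_n) : {mpoly C[UT_dim n]} :=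
  'X_(@enum_rank (UT_index n) (exist (fun ij : 'I_n * 'I_n => (ij.1 <= ij.2)%N) (i, i) (leqnn i))).

Definition sym_diag (n : nat) : {mpoly C[UT_dim n]} -> Prop :=
  fun p => exists q : {mpoly C[n]},
      q \is symmetric /\ p = comp_mpoly [tuple UT_diagvar i | i < n] q.

End Defs.

From HB Require Import structures.
From mathcomp Require Import all_boot all_order all_algebra.
From mathcomp Require Import fingroup perm.
From mathcomp Require Import mpoly.
From mathcomp Require Import zify ring.
Set Implicit Arguments. Unset Strict Implicit. Unset Printing Implicit Defensive.
Import GRing.Theory Num.Theory.
Local Open Scope ring_scope.

(* Order the monomial basis of S^d(C^n) by the weight sum_l (l+1) a_l. Since E_ij maps
   e^a to a multiple of e^(a - e_j + e_i), every E_ij with i < j is strictly triangular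
   and E_ii is diagonal with eigenvalue a_i. Hence the characteristic polynomial is
   prod_a (x_0 + y_a), y_a = sum_i a_i x_i over the monomials a of degree d, and its
   coefficients are the elementary symmetric functions of the y_a: they are symmetric
   in the x_i, because permuting the x_i permutes the y_a.
   Conversely, by Newton's identities the coefficient algebra contains every power sum
   sum_a y_a^k. Counting |a| = d as sum_i sum_(r < d) [r < a_i] gives a recursion in d
   showing that sum_a y_a^k is a positive multiple of x_1^k + ... + x_n^k modulo the
   lower power sums of the x_i. So all power sums of the x_i, and with them all
   symmetric polynomials, lie in the coefficient algebra. *)

Section SymmetricFunctions.
Variables (R : comPzRingType) (I : finType) (x : I -> R).

Definition elem_sym k := \sum_(h : {set I} | #|h| == k) \prod_(u in h) x u.
Definition power_sum k := \sum_(i : I) x i ^+ k.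

Definition newton_out j l := \sum_(h : {set I} | #|h| == l)
   \sum_(i | i \notin h) x i ^+ j * \prod_(u in h) x u.
Definition newton_in j l := \sum_(h : {set I} | #|h| == l)
   \sum_(i | i \in h) x i ^+ j * \prod_(u in h) x u.

Lemma elem_sym0 : elem_sym 0 = 1.
Proof.
rewrite /elem_sym (big_pred1 set0) => [|h]; last by rewrite cards_eq0.
by rewrite big_set0.
Qed.

Lemma elem_sym_gt k : (#|I| < k)%N -> elem_sym k = 0.
Proof.
move=> Ik; rewrite /elem_sym big_pred0 // => h.
by apply/negbTE; rewrite neq_ltn (leq_ltn_trans (max_card _) Ik).
Qed.

Lemma elem_sym_power_sum j l : elem_sym l * power_sum j = newton_out j l + newton_in j l.
Proof.
rewrite /elem_sym /power_sum mulr_suml -big_split /=; apply eq_bigr => h _.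
rewrite mulr_sumr (bigID (fun i => i \in h)) /= addrC.
by congr (_ + _); apply eq_bigr => i _; rewrite mulrC.
Qed.

Lemma newton_inS j l : newton_in j l.+1 = newton_out j.+1 l.
Proof.
rewrite /newton_in /newton_out (exchange_big_dep xpredT) //=.
rewrite [RHS](exchange_big_dep xpredT) //=; apply eq_bigr => i _.
rewrite (reindex_onto (fun h => i |: h) (fun h => h :\ i)) /=; last first.
  by move=> h /andP[_ ih]; rewrite setD1K.
apply eq_big => h.
  case hi: (i \in h).
    rewrite /= andbF; apply/negP => /andP[_ /eqP e].
    by have := hi; rewrite -e !inE eqxx.
  by rewrite /= setU1K ?hi // eqxx setU11 cardsU1 hi andbT add1n eqSS.
move=> /andP[/andP[_ _] /eqP e].
have hi : i \notin h by rewrite -e !inE eqxx.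
by rewrite big_setU1 // mulrA -exprSr.
Qed.

Lemma newton_in0 j : newton_in j 0 = 0.
Proof.
rewrite /newton_in big1 // => h /eqP /cards0_eq ->.
by apply: big_pred0 => i; rewrite in_set0.
Qed.

Lemma newton_out1 k : newton_out 1 k = k.+1%:R * elem_sym k.+1.
Proof.
rewrite -newton_inS /newton_in /elem_sym mulr_sumr; apply eq_bigr => h /eqP hk.
have -> : \sum_(i in h) x i ^+ 0 * \prod_(u in h) x u = \sum_(i in h) \prod_(u in h) x u.
  by apply: eq_bigr => i _; rewrite expr0 mul1r.
by rewrite sumr_const hk mulr_natl.
Qed.

(* Both sides telescope through the sums [newton_out (i+1) (k-i)]. *)
Lemma newton_identity k : k.+1%:R * elem_sym k.+1 =
  \sum_(i < k.+1) (-1) ^+ i * elem_sym (k - i)%N * power_sum i.+1.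
Proof.
pose T i := (-1) ^+ i * newton_out i.+1 (k - i)%N.
have -> : \sum_(i < k.+1) (-1) ^+ i * elem_sym (k - i)%N * power_sum i.+1
          = \sum_(i < k) (T i - T i.+1) + T k.
  rewrite big_ord_recr /=; congr (_ + _).
    apply eq_bigr => i _; rewrite -mulrA elem_sym_power_sum /T.
    rewrite -[(k - i)%N](subnSK (ltn_ord i)) newton_inS.
    by rewrite mulrDr exprS mulN1r mulNr opprK.
  by rewrite -mulrA elem_sym_power_sum /T subnn newton_in0 addr0.
rewrite -(big_mkord xpredT (fun i => T i - T i.+1)).
under eq_bigr do rewrite -opprB.
by rewrite sumrN telescope_sumr // opprB subrK /T subn0 expr0 mul1r newton_out1.
Qed.

End SymmetricFunctions.

Lemma elem_sym_perm (R : comPzRingType) (I : finType) (x : I -> R) (s : I -> I) j :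
  injective s -> elem_sym (x \o s) j = elem_sym x j.
Proof.
move=> s_inj; rewrite /elem_sym [RHS](reindex_inj (imset_inj s_inj)) /=.
apply: eq_big => [h|h _]; first by rewrite card_imset.
by rewrite big_imset //= => u v _ _; apply: s_inj.
Qed.

Lemma rmorph_elem_sym (R S : comPzRingType) (f : {rmorphism R -> S})
    (I : finType) (x : I -> R) j :
  f (elem_sym x j) = elem_sym (f \o x) j.
Proof. by rewrite rmorph_sum; apply eq_bigr => h _; rewrite rmorph_prod. Qed.

Lemma coef_prod_XaddC (R : idomainType) k (z : 'I_k -> R) (i : 'I_k) :
  (\prod_(a < k) ('X + (z a)%:P))`_(k - i.+1) = elem_sym z i.+1.
Proof.
pose cs := [tuple - z a | a < k].
have -> : \prod_(a < k) ('X + (z a)%:P) = \prod_(c <- cs) ('X - c%:P).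
  by rewrite big_tuple; apply eq_bigr => a _; rewrite tnth_mktuple polyCN opprK.
have hi : (i.+1 < k.+1)%N by rewrite ltnS ltn_ord.
rewrite (mroots_coeff cs (Ordinal hi)) /= /mesym rmorph_sum mulr_sumr.
apply eq_bigr => h /eqP hh; rewrite rmorph_prod /=.
under eq_bigr => u _ do rewrite mevalXU tnth_mktuple.
by rewrite prodrN hh signrMK.
Qed.

Section Subalgebras.
Variables (K : comNzRingType) (n : nat).

Definition subalg (S : {mpoly K[n]} -> Prop) :=
  [/\ forall c, S c%:MP, forall x y, S x -> S y -> S (x + y)
    & forall x y, S x -> S y -> S (x * y)].

Variables (S : {mpoly K[n]} -> Prop) (S_subalg : subalg S).

Lemma subalgC c : S c%:MP. Proof. by case: S_subalg. Qed.

Lemma subalgD x y : S x -> S y -> S (x + y). Proof. by case: S_subalg => _ hD _; apply: hD. Qed.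

Lemma subalgM x y : S x -> S y -> S (x * y). Proof. by case: S_subalg => _ _ hM; apply: hM. Qed.

Lemma subalg_nat k : S k%:R. Proof. by rewrite -mpolyC_nat; apply: subalgC. Qed.

Lemma subalgZ c x : S x -> S (c *: x).
Proof. by rewrite -mul_mpolyC; apply: subalgM; apply: subalgC. Qed.

Lemma subalgB x y : S x -> S y -> S (x - y).
Proof. by move=> Sx Sy; rewrite -scaleN1r; apply: subalgD => //; apply: subalgZ. Qed.

Lemma subalgX x k : S x -> S (x ^+ k).
Proof.
move=> Sx; elim: k => [|k ih]; first by rewrite expr0 -mpolyC1; apply: subalgC.
by rewrite exprS; apply: subalgM.
Qed.

Lemma subalg_sign k : S ((-1) ^+ k).
Proof. by apply: subalgX; rewrite -mpolyCN; apply: subalgC. Qed.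

Lemma subalg_sum (I : Type) (r : seq I) (P : pred I) F :
  (forall i, P i -> S (F i)) -> S (\sum_(i <- r | P i) F i).
Proof. by apply: big_ind => //; [rewrite -mpolyC0; apply: subalgC|apply: subalgD]. Qed.

Lemma subalg_prod (I : Type) (r : seq I) (P : pred I) F :
  (forall i, P i -> S (F i)) -> S (\prod_(i <- r | P i) F i).
Proof. by apply: big_ind => //; [rewrite -mpolyC1; apply: subalgC|apply: subalgM]. Qed.

Lemma subalg_comp k (t : k.-tuple {mpoly K[n]}) (P : {mpoly K[k]}) :
  (forall i, S (tnth t i)) -> S (P \mPo t).
Proof.
move=> St; rewrite comp_mpolyE; apply: subalg_sum => m _.
by apply: subalgZ; apply: subalg_prod => i _; apply: subalgX.
Qed.

Lemma subalg_power_sum (I : finType) (x : I -> {mpoly K[n]}) :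
  (forall j, S (elem_sym x j)) -> forall k, S (power_sum x k).
Proof.
move=> Se; elim/ltn_ind => -[_|k IH].
  rewrite /power_sum (eq_bigr (fun=> 1)) => [|i _]; last by rewrite expr0.
  by rewrite sumr_const; apply: subalg_nat.
have := newton_identity x k; rewrite big_ord_recr /= subnn elem_sym0 mulr1 => newton.
have -> : power_sum x k.+1 = (-1) ^+ k * (k.+1%:R * elem_sym x k.+1 -
    \sum_(i < k) (-1) ^+ i * elem_sym x (k - i)%N * power_sum x i.+1).
  by rewrite newton addrAC subrr add0r signrMK.
apply: subalgM; first exact: subalg_sign.
apply: subalgB; first by apply: subalgM; [apply: subalg_nat|apply: Se].
apply: subalg_sum => i _; apply: subalgM; last by apply: IH; rewrite ltnS ltn_ord.
by apply: subalgM; [apply: subalg_sign|apply: Se].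
Qed.

End Subalgebras.

Lemma subalg_elem_sym (K : numFieldType) n (S : {mpoly K[n]} -> Prop)
    (I : finType) (x : I -> {mpoly K[n]}) : subalg S ->
  (forall j, (0 < j)%N -> S (power_sum x j)) -> forall k, S (elem_sym x k).
Proof.
move=> S_subalg Sp; elim/ltn_ind => -[_|k IH].
  by rewrite elem_sym0 -mpolyC1; apply: (subalgC S_subalg).
have k1_neq0 : (k.+1%:R : K) != 0 by rewrite pnatr_eq0.
have -> : elem_sym x k.+1 = k.+1%:R^-1 *: (k.+1%:R * elem_sym x k.+1).
  by rewrite mulr_natl -scaler_nat scalerA mulVf // scale1r.
rewrite newton_identity; apply: (subalgZ S_subalg); apply: (subalg_sum S_subalg) => i _.
apply: (subalgM S_subalg); last exact: Sp.
apply: (subalgM S_subalg); first exact: subalg_sign.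
by apply: IH; rewrite ltnS leq_subr.
Qed.

Section GeneratedSubalgebra.
Variables (K : comNzRingType) (n k : nat) (t : k.-tuple {mpoly K[n]}).

Definition alg_gen x := exists P : {mpoly K[k]}, x = P \mPo t.

Lemma alg_gen_subalg : subalg alg_gen.
Proof.
split.
- by move=> c; exists c%:MP; rewrite comp_mpolyC.
- by move=> x y [P ->] [Q ->]; exists (P + Q); rewrite rmorphD.
- by move=> x y [P ->] [Q ->]; exists (P * Q); rewrite rmorphM.
Qed.

Lemma alg_gen_tnth i : alg_gen (tnth t i).
Proof. by exists 'X_i; rewrite comp_mpolyXU -tnth_nth. Qed.

End GeneratedSubalgebra.

Lemma alg_gen_elem_sym (K : comNzRingType) n m (x : 'I_m -> {mpoly K[n]}) j :
  alg_gen [tuple elem_sym x i.+1 | i < m] (elem_sym x j).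
Proof.
have S_subalg := alg_gen_subalg [tuple elem_sym x i.+1 | i < m].
case: j => [|j]; first by rewrite elem_sym0 -mpolyC1; apply: subalgC.
case: (ltnP j m) => [jm|mj].
  by have := alg_gen_tnth [tuple elem_sym x i.+1 | i < m] (Ordinal jm); rewrite tnth_mktuple.
by rewrite elem_sym_gt ?card_ord // -mpolyC0; apply: subalgC.
Qed.

Lemma comp_mpolyA (K : comNzRingType) n N k (f : 'I_k -> {mpoly K[n]})
    (P : {mpoly K[k]}) (D : n.-tuple {mpoly K[N]}) :
  P \mPo [tuple f i \mPo D | i < k] = (P \mPo [tuple f i | i < k]) \mPo D.
Proof.
rewrite [LHS]comp_mpolyE (comp_mpolyE P) raddf_sum /=; apply eq_bigr => m _.
rewrite linearZ /= rmorph_prod; congr (_ *: _); apply eq_bigr => i _.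
by rewrite !tnth_mktuple rmorphXn.
Qed.

Lemma sum_ltn_indicator m e : (m <= e)%N -> (\sum_(r < e) (r < m) = m)%N.
Proof.
move=> me; rewrite -(big_mkord xpredT (fun r => (r < m)%N : nat)).
rewrite (big_cat_nat (leq0n m) me) /=.
rewrite (eq_big_nat _ _ (F2 := fun=> 1%N)) => [|r /andP[_ ->]//].
rewrite [X in (_ + X)%N](eq_big_nat _ _ (F2 := fun=> 0%N)) => [|r /andP[mr _]].
  by rewrite !sum_nat_const_nat muln0 muln1 subn0 addn0.
by rewrite ltnNge mr.
Qed.

Section LinearForms.
Variables (K : comNzRingType) (n : nat).

Definition linform (a : 'X_{1..n}) : {mpoly K[n]} := \sum_(i < n) (a i)%:R *: 'X_i.

Lemma linformD a b : linform (a + b)%MM = linform a + linform b.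
Proof.
by rewrite /linform -big_split; apply eq_bigr => i _; rewrite mnmDE natrD scalerDl.
Qed.

Lemma linformU i r : linform (U_(i) *+ r)%MM = r%:R *: 'X_i.
Proof.
rewrite /linform (bigD1 i) //= big1 ?addr0 => [|l /negbTE nl].
  by rewrite mulmnE mnm1E eqxx mul1n.
by rewrite mulmnE mnm1E eq_sym nl mul0n scale0r.
Qed.

End LinearForms.

Section PowerSumsOfLinearForms.
Variables (K : numFieldType) (n d : nat).
Local Notation P := {mpoly K[n]}.
Local Notation BM := 'X_{1..n < d.+1}.
Local Notation p_ k := (power_sum (fun i : 'I_n => ('X_i : P)) k).

Definition linform_psum e k : P := \sum_(a : BM | mdeg a == e) linform K a ^+ k.

Definition n_monomials e := #|[pred a : BM | mdeg a == e]|.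

Lemma sum_bmnm_shift e r i (F : 'X_{1..n} -> P) : (r < e)%N -> (e <= d)%N ->
  \sum_(a : BM | (mdeg a == e) && (r < a i)%N) F a =
  \sum_(b : BM | mdeg b == (e - r.+1)%N) F (b + U_(i) *+ r.+1)%MM.
Proof.
move=> re ed; set u := (U_(i) *+ r.+1)%MM.
have mdeg_u : mdeg u = r.+1 by rewrite mdegMn mdeg1 mul1n.
have u_i : u i = r.+1 by rewrite mulmnE mnm1E eqxx mul1n.
pose h (b : BM) : BM := insubd b (b + u)%MM.
pose h' (a : BM) : BM := insubd a (a - u)%MM.
have h'E (a : BM) : val (h' a) = (a - u)%MM.
  by rewrite /h' insubdK // -topredE /= (leq_ltn_trans (mdegB _ _)) ?bmdeg.
have hE (b : BM) : mdeg b == (e - r.+1)%N -> val (h b) = (b + u)%MM.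
  by move=> /eqP hb; rewrite /h insubdK // -topredE /= mdegD mdeg_u hb subnK.
rewrite (reindex_onto h h'); last first.
  move=> a /andP[/eqP ha ria].
  have ua : (u <= a)%MM.
    apply/mnm_lepP => l; rewrite mulmnE mnm1E.
    by case: eqP => [<-|_]; rewrite ?mul1n ?mul0n.
  apply: val_inj; rewrite /h insubdK; first by rewrite h'E submK.
  by rewrite -topredE /= h'E submK //; exact: bmdeg.
have domE (b : BM) : [&& mdeg (h b) == e, r < h b i & h' (h b) == b]%N
    = (mdeg b == (e - r.+1)%N).
  case hb: (mdeg b == (e - r.+1)%N).
    rewrite hE // mdegD mdeg_u (eqP hb) subnK // eqxx /= mnmDE u_i addnS ltnS leq_addl /=.
    by apply/eqP/val_inj; rewrite h'E hE // addmK.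
  case hv: (mdeg b + r.+1 < d.+1)%N.
    have vb : val (h b) = (b + u)%MM by rewrite /h insubdK // -topredE /= mdegD mdeg_u.
    rewrite vb mdegD mdeg_u.
    by case: eqP => //= he; move: hb; rewrite -he addnK eqxx.
  have -> : h b = b by apply: val_inj; rewrite /h val_insubd /= mdegD mdeg_u hv.
  apply/negbTE/negP => /and3P[/eqP he rb /eqP hh].
  have := congr1 (fun z : BM => (val z) i) hh; rewrite h'E mnmBE u_i => hi.
  have hi2 : ((b : 'X_{1..n}) i - r.+1)%N = (b : 'X_{1..n}) i by exact: hi.
  move: rb hi2; lia.
apply: eq_big => [b|b]; first by rewrite -andbA domE.
by rewrite -andbA domE => hb; rewrite hE.
Qed.

Lemma mnm_le_mdeg (a : 'X_{1..n}) i : (a i <= mdeg a)%N.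
Proof. by rewrite mdegE (bigD1 i) //= leq_addr. Qed.

(* Count [e = mdeg a] as [sum_i sum_(r < e) [r < a i]], then strip [r+1] from [a i]. *)
Lemma linform_psum_rec e k : (e <= d)%N ->
  e%:R * linform_psum e k = \sum_(r < e) \sum_(j < k.+1)
      ('C(k, j) * r.+1 ^ j)%:R *: (p_ j * linform_psum (e - r.+1)%N (k - j)%N).
Proof.
move=> ed.
have -> : e%:R * linform_psum e k = \sum_(r < e) \sum_(i < n)
     \sum_(a : BM | (mdeg a == e) && (r < a i)%N) linform K a ^+ k.
  rewrite /linform_psum mulr_sumr.
  rewrite (eq_bigr (fun a : BM => \sum_(r < e) \sum_(i < n)
                ((r < a i)%N)%:R * linform K a ^+ k)); last first.
    move=> a /eqP ha; rewrite exchange_big /=.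
    under eq_bigr => i _ do rewrite -mulr_suml.
    rewrite -mulr_suml; congr (_ * _).
    rewrite -{1}ha mdegE natr_sum; apply eq_bigr => i _.
    by rewrite -natr_sum sum_ltn_indicator // -ha mnm_le_mdeg.
  rewrite exchange_big /=; apply eq_bigr => r _.
  rewrite exchange_big /=; apply eq_bigr => i _.
  rewrite [RHS]big_mkcondr /=; apply eq_bigr => a _.
  by case: (r < a i)%N; rewrite ?mul1r ?mul0r.
apply eq_bigr => r _.
rewrite (eq_bigr (fun i : 'I_n => \sum_(b : BM | mdeg b == (e - r.+1)%N)
     \sum_(j < k.+1) ('C(k, j) * r.+1 ^ j)%:R *: ('X_i ^+ j * linform K b ^+ (k - j))));
  last first.
  move=> i _; rewrite (sum_bmnm_shift i (fun a => linform K a ^+ k) (ltn_ord r) ed).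
  apply eq_bigr => b _; rewrite linformD linformU exprDn; apply eq_bigr => j _.
  by rewrite exprZn -scalerAr -scaler_nat scalerA -natrX -natrM [linform K b ^+ _ * _]mulrC.
under eq_bigr => i _ do rewrite exchange_big /=.
rewrite exchange_big /=; apply eq_bigr => j _.
rewrite /power_sum /linform_psum mulr_suml scaler_sumr; apply eq_bigr => i _.
by rewrite mulr_sumr scaler_sumr.
Qed.

Lemma linform_psum0 e : linform_psum e 0 = (n_monomials e)%:R.
Proof.
rewrite /linform_psum (eq_bigr (fun=> 1)) => [|a _]; last by rewrite expr0.
by rewrite sumr_const.
Qed.

Lemma linform_psum_mdeg0 k : linform_psum 0 k.+1 = 0.
Proof.
rewrite /linform_psum big1 // => a /eqP ha.
have a0 : (a : 'X_{1..n}) = 0%MM by apply/eqP; rewrite -mdeg_eq0 ha.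
by rewrite /linform big1 ?expr0n // => i _; rewrite a0 mnm0E scale0r.
Qed.

Lemma n_monomials0_gt0 : (0 < n_monomials 0)%N.
Proof. by apply/card_gt0P; exists (@bm0 n d); rewrite inE /= mdeg0. Qed.

Lemma power_sumX0 : p_ 0 = n%:R.
Proof.
rewrite /power_sum (eq_bigr (fun=> 1)) => [|i _]; last by rewrite expr0.
by rewrite sumr_const card_ord.
Qed.

Definition psum_alg k (x : P) := forall S : P -> Prop, subalg S ->
  (forall j, (0 < j < k)%N -> S (p_ j)) -> S x.

Lemma psum_alg_subalg k : subalg (psum_alg k).
Proof.
split.
- by move=> c S hS _; apply: subalgC.
- by move=> x y hx hy S hS hp; apply: subalgD hS _ _ (hx S hS hp) (hy S hS hp).
- by move=> x y hx hy S hS hp; apply: subalgM hS _ _ (hx S hS hp) (hy S hS hp).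
Qed.

Lemma psum_alg_power_sum k j : (0 < j < k)%N -> psum_alg k (p_ j).
Proof. by move=> hj S _ hp; apply: hp. Qed.

Lemma psum_alg_mono k k' x : (k <= k')%N -> psum_alg k x -> psum_alg k' x.
Proof.
move=> kk hx S hS hp; apply: hx => // j /andP[j0 jk]; apply: hp.
by rewrite j0 (leq_trans jk kk).
Qed.

(* In [linform_psum_rec], the term j = k+1 is a multiple of [p_(k+1)], the term
   j = 0 is one modulo lower power sums by induction, and the others are products
   of lower power sums. *)
Lemma linform_psum_step e k (f : 'I_e -> K) : (e <= d)%N ->
  (forall r : 'I_e, psum_alg k.+1 (linform_psum (e - r.+1)%N k.+1 - f r *: p_ k.+1)) ->
  (forall e1 k1, (e1 < e)%N -> (0 < k1 <= k)%N -> psum_alg k.+1 (linform_psum e1 k1)) ->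
  psum_alg k.+1 (e%:R * linform_psum e k.+1 - (\sum_(r < e)
      (n%:R * f r + (r.+1 ^ k.+1 * n_monomials (e - r.+1)%N)%:R)) *: p_ k.+1).
Proof.
move=> ed hf hlow; have A_subalg := psum_alg_subalg k.+1.
rewrite linform_psum_rec // scaler_suml -sumrB; apply: (subalg_sum A_subalg) => r _.
rewrite big_ord_recl big_ord_recr /= scalerDl.
set T0 := (X in X + (_ + _) - _); set Tm := (X in _ + (X + _) - _).
set Tk := (X in _ + (_ + X) - _); set A0 := (X in _ - (X + _)).
set Ak := (X in _ - (_ + X)).
have -> : T0 + (Tm + Tk) - (A0 + Ak) = (T0 - A0) + Tm + (Tk - Ak) by ring.
have -> : Tk - Ak = 0.
  rewrite /Tk /Ak subnn binn mul1n linform_psum0 mulr_natr -scaler_nat scalerA.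
  by rewrite -natrM subrr.
rewrite addr0; apply: (subalgD A_subalg).
  rewrite /T0 /A0 bin0 expn0 muln1 subn0 power_sumX0 scale1r mulr_natl -scaler_nat.
  by rewrite -scalerA -scalerBr; apply: (subalgZ A_subalg).
apply: (subalg_sum A_subalg) => j _; apply: (subalgZ A_subalg).
apply: (subalgM A_subalg).
  by apply: psum_alg_power_sum; rewrite /bump /= add1n ltnS ltn_ord.
apply: hlow; first by have := ltn_ord r; lia.
by rewrite /bump leq0n /= add1n subSS subn_gt0 ltn_ord /= leq_subr.
Qed.

Lemma linform_psum_leading e k : (e <= d)%N -> exists l,
  [/\ 0 <= l, (0 < e)%N -> (0 < k)%N -> 0 < l
    & psum_alg k (linform_psum e k - l *: p_ k)].
Proof.
elim/ltn_ind: e k => e IH [|k] ed.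
  exists 0; split => //; rewrite scale0r subr0 linform_psum0.
  by apply: subalg_nat; apply: psum_alg_subalg.
case: e IH ed => [|e'] IH ed.
  exists 0; split => //; rewrite linform_psum_mdeg0 scale0r subr0 -(mulr0n 1).
  by apply: subalg_nat; apply: psum_alg_subalg.
set e := e'.+1; have A_subalg := psum_alg_subalg k.+1.
have [f hf] := fin_all_exists (fun r : 'I_e =>
  IH (e - r.+1)%N (leq_subr r e') k.+1 (leq_trans (leq_subr _ _) ed)).
have hlow e1 k1 : (e1 < e)%N -> (0 < k1 <= k)%N -> psum_alg k.+1 (linform_psum e1 k1).
  move=> e1e /andP[k10 k1k].
  have [l [_ _ hl]] := IH e1 e1e k1 (leq_trans (ltnW e1e) ed).
  rewrite -(subrK (l *: p_ k1) (linform_psum e1 k1)).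
  apply: (subalgD A_subalg); first exact: psum_alg_mono (ltnW _) hl.
  by apply: (subalgZ A_subalg); apply: psum_alg_power_sum; rewrite k10 ltnS.
have e_neq0 : (e%:R : K) != 0 by rewrite pnatr_eq0.
pose c (r : 'I_e) := n%:R * f r + (r.+1 ^ k.+1 * n_monomials (e - r.+1)%N)%:R.
have c_ge0 r : 0 <= c r by apply: addr_ge0 => //; apply: mulr_ge0 => //; case: (hf r).
exists (e%:R^-1 * \sum_(r < e) c r); split.
- by apply: mulr_ge0; [rewrite invr_ge0 ler0n|apply: sumr_ge0].
- move=> _ _; apply: mulr_gt0; first by rewrite invr_gt0 ltr0n.
  rewrite (bigD1 ord_max) //=; apply: ltr_wpDr; first exact: sumr_ge0.
  apply: ltr_wpDl; first by apply: mulr_ge0 => //; case: (hf ord_max).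
  by rewrite ltr0n /= subnn muln_gt0 expn_gt0 n_monomials0_gt0.
have -> : linform_psum e k.+1 - (e%:R^-1 * \sum_(r < e) c r) *: p_ k.+1 =
    e%:R^-1 *: (e%:R * linform_psum e k.+1 - (\sum_(r < e) c r) *: p_ k.+1).
  by rewrite scalerBr mulr_natl -scaler_nat !scalerA mulVf // scale1r.
apply: (subalgZ A_subalg); apply: linform_psum_step => // r; by case: (hf r).
Qed.

Lemma subalg_power_sumX (S : P -> Prop) : subalg S -> (0 < d)%N ->
  (forall k, (0 < k)%N -> S (linform_psum d k)) -> forall k, (0 < k)%N -> S (p_ k).
Proof.
move=> S_subalg d_gt0 SQ; elim/ltn_ind => k IH k_gt0.
have [l [_ l_gt0 hl]] := linform_psum_leading k (leqnn d).
have l_neq0 : l != 0 := lt0r_neq0 (l_gt0 d_gt0 k_gt0).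
rewrite -[p_ k](scalerK l_neq0) -[l *: p_ k](subKr (linform_psum d k)).
apply/(subalgZ S_subalg)/(subalgB S_subalg); first exact: SQ.
by apply: hl => // j /andP[j0 jk]; apply: IH.
Qed.

Lemma subalg_symmetric (S : P -> Prop) : subalg S ->
  (forall k, (0 < k)%N -> S (p_ k)) -> forall q : P, q \is symmetric -> S q.
Proof.
move=> S_subalg Sp q /sym_fundamental [t [<- _]].
apply: (subalg_comp S_subalg) => i; rewrite tnth_map tnth_ord_tuple.
exact: (subalg_elem_sym S_subalg Sp).
Qed.

End PowerSumsOfLinearForms.

(* A permutation other than 1 with all [A i (s i)] nonzero would strictly raise the
   total weight. *)
Lemma det_weight_trig (R : comPzRingType) m (A : 'M[R]_m) (w : 'I_m -> nat) :
  (forall a b, a != b -> A a b != 0 -> (w a < w b)%N) -> \det A = \prod_a A a a.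
Proof.
move=> hA; rewrite /determinant (bigD1 (1%g : 'S_m)) //= [X in _ + X]big1 => [|s s1].
  by rewrite odd_perm1 expr0 mul1r addr0; apply eq_bigr => i _; rewrite perm1.
case: (boolP [exists i, A i (s i) == 0]) => [/existsP[i /eqP hi]|].
  by rewrite (bigD1 i) //= hi mul0r mulr0.
rewrite negb_exists => /forallP hnz.
have w_le i : (w i <= w (s i))%N.
  by case: (eqVneq i (s i)) => [<-//|ne]; rewrite ltnW // hA // hnz.
have [i0 hi0] : exists i0, s i0 != i0.
  apply/existsP; move: s1; apply: contraR; rewrite negb_exists => /forallP h.
  by apply/eqP/permP => i; rewrite perm1; apply/eqP; move/negPn: (h i).
have : (\sum_i w i < \sum_i w (s i))%N.
  rewrite (bigD1 i0) //= [X in (_ < X)%N](bigD1 i0) //= -addSn leq_add ?leq_sum //.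
  by rewrite hA ?hnz // eq_sym.
by rewrite (reindex_inj (@perm_inj _ s)) /= ltnn.
Qed.

Section UpperTriangularAction.
Variables (C : numClosedFieldType) (n d : nat).
Local Notation Sd_index n d := {mo : 'X_{1..n < d.+1} | (mdeg mo == d)%N}.
Local Notation UT_index n := {ij : 'I_n * 'I_n | (ij.1 <= ij.2)%N}.
Local Notation m := (Sd_dim n d).

Definition Sd_monom (a : 'I_m) : 'X_{1..n} :=
  val (val (@enum_val _ (mem {: Sd_index n d}) a)).

Lemma Sd_monom_inj : injective Sd_monom.
Proof. by move=> a b h; apply/enum_val_inj/val_inj/val_inj. Qed.

Lemma Sd_act_delta (i j : 'I_n) (p : {mpoly C[n]}) :
  Sd_act (delta_mx i j) p = 'X_i * p^`M(j).
Proof.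
have row_sum k : \sum_(l < n) delta_mx i j k l *: ('X_k * p^`M(l))
    = (k == i)%:R *: ('X_k * p^`M(j)).
  rewrite (bigD1 j) //= big1 ?addr0 => [|l lj]; first by rewrite mxE eqxx andbT.
  by rewrite mxE (negbTE lj) andbF scale0r.
rewrite /Sd_act (eq_bigr _ (fun k _ => row_sum k)) (bigD1 i) //= big1 ?addr0.
  by rewrite eqxx scale1r.
by move=> k /negbTE ->; rewrite scale0r.
Qed.

Lemma Sd_mx_delta (i j : 'I_n) a b : Sd_mx d (delta_mx i j : 'M[C]_n) a b
  = (Sd_monom b j)%:R * ((Sd_monom b - U_(j) + U_(i))%MM == Sd_monom a)%:R.
Proof. by rewrite mxE Sd_act_delta mderivX -scalerAr -mpolyXD mcoeffZ mcoeffX addmC. Qed.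

Lemma Sd_mx_delta_offdiag (i j : 'I_n) a b : (i <= j)%N -> a != b ->
  Sd_mx d (delta_mx i j : 'M[C]_n) a b != 0 ->
  (mnmwgt (Sd_monom a) < mnmwgt (Sd_monom b))%N.
Proof.
move=> ij ab; rewrite Sd_mx_delta.
have [->|bj] := posnP (Sd_monom b j); first by rewrite mul0r eqxx.
have [ha _|] := eqVneq (Sd_monom b - U_(j) + U_(i))%MM (Sd_monom a); last first.
  by rewrite mulr0 eqxx.
have Ujb : (U_(j) <= Sd_monom b)%MM by rewrite lep1mP -lt0n.
have hw : (mnmwgt (Sd_monom a) + j.+1 = mnmwgt (Sd_monom b) + i.+1)%N.
  by rewrite -ha -!mnmwgt1 -!mnmwgtD -addmA [(U_(i) + _)%MM]addmC addmA submK.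
case: (ltngtP i j) => [|ji|/val_inj eij]; first by lia.
  by move: ij; rewrite leqNgt ji.
by move: ha ab; rewrite eij submK // => /Sd_monom_inj ->; rewrite eqxx.
Qed.

Lemma Sd_mx_delta_diag (i j : 'I_n) a : Sd_mx d (delta_mx i j : 'M[C]_n) a a
  = if i == j then (Sd_monom a i)%:R else 0.
Proof.
rewrite Sd_mx_delta; have [aj|aj] := posnP (Sd_monom a j).
  by rewrite aj mul0r; case: eqP => // ->; rewrite aj.
have [->|ij] := eqVneq i j.
  by rewrite submK ?eqxx ?mulr1 // lep1mP -lt0n.
case: eqP => [/(congr1 (fun z : 'X_{1..n} => z j))|]; last by rewrite mulr0.
by rewrite mnmDE mnmBE !mnm1E eqxx (negbTE ij); lia.
Qed.

Local Notation B k := (Sd_mx d (@UT_basis C n k)).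

Definition UT_diag : n.-tuple {mpoly C[UT_dim n]} := [tuple UT_diagvar C i | i < n].

Lemma lie_charpoly_UT : lie_charpoly (fun k => B k)
  = \prod_(a < m) ('X + (\sum_(k < UT_dim n) 'X_k * (B k a a)%:MP)%:P).
Proof.
rewrite /lie_charpoly; set M := \sum_(k < _) _ *: _.
have M_entry a b : M a b = \sum_(k < UT_dim n) 'X_k * (B k a b)%:MP.
  by rewrite summxE; apply eq_bigr => k _; rewrite !mxE.
rewrite (@det_weight_trig _ _ _ (mnmwgt \o Sd_monom)).
  by apply eq_bigr => a _; rewrite !mxE eqxx mulr1n M_entry.
move=> a b ab; rewrite !mxE (negbTE ab) mulr0n add0r polyC_eq0 M_entry.
have [/existsP[k Bk_neq0] _|/existsPn B0] := boolP [exists k, B k a b != 0].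
  move: Bk_neq0; apply: Sd_mx_delta_offdiag => //.
  exact: (valP (@enum_val _ (mem {: UT_index n}) k)).
by rewrite big1 ?eqxx // => k _; move/negPn/eqP: (B0 k) ->; rewrite mpolyC0 mulr0.
Qed.

Lemma UT_charmx_diag a : \sum_(k < UT_dim n) 'X_k * (B k a a)%:MP
  = linform C (Sd_monom a) \mPo UT_diag.
Proof.
rewrite /linform raddf_sum /=.
under [RHS]eq_bigr => i _ do rewrite comp_mpolyZ comp_mpolyXU -tnth_nth tnth_mktuple.
pose F (u : UT_index n) : {mpoly C[UT_dim n]} :=
  'X_(enum_rank u) * (Sd_mx d (delta_mx (val u).1 (val u).2 : 'M[C]_n) a a)%:MP.
rewrite (eq_bigr (F \o enum_val)) => [|k _]; last by rewrite /F /= enum_valK.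
rewrite -(big_enum_val F) /= (bigID (fun u : UT_index n => (val u).1 == (val u).2)) /=.
rewrite [X in _ + X]big1 ?addr0 => [|u /negbTE nd]; last first.
  by rewrite /F Sd_mx_delta_diag nd mpolyC0 mulr0.
pose diag_index (i : 'I_n) : UT_index n := exist _ (i, i) (leqnn i).
rewrite (reindex_onto diag_index (fun u : UT_index n => (val u).1)) /=; last first.
  by move=> [[x y] pf] /= /eqP exy; apply: val_inj; rewrite /= exy.
apply: eq_big => [i|i _]; first by rewrite !eqxx.
by rewrite /F /= Sd_mx_delta_diag eqxx mulrC mul_mpolyC.
Qed.

Lemma lie_coeffs_UT : lie_coeffs (fun k => B k) =
  [tuple elem_sym (fun a => linform C (Sd_monom a)) i.+1 \mPo UT_diag | i < m].
Proof.
apply: eq_from_tnth => i; rewrite !tnth_mktuple lie_charpoly_UT coef_prod_XaddC.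
rewrite (rmorph_elem_sym (comp_mpoly UT_diag)).
by apply: eq_bigr => h _; apply: eq_bigr => u _; rewrite UT_charmx_diag.
Qed.

End UpperTriangularAction.

Arguments Sd_monom {n d}.

Definition mnm_perm n (s : 'S_n) (x : 'X_{1..n}) : 'X_{1..n} :=
  [multinom x ((s^-1)%g i) | i < n].

Lemma msym_linform (K : comNzRingType) n (s : 'S_n) (x : 'X_{1..n}) :
  msym s (linform K x) = linform K (mnm_perm s x).
Proof.
rewrite /linform raddf_sum /= [RHS](reindex_inj (@perm_inj _ s)) /=.
by apply eq_bigr => l _; rewrite msymZ /msym mmapX mmap1U mnmE permK.
Qed.

Section SymmetricPowerPermutation.
Variables (C : numClosedFieldType) (n d : nat).
Local Notation Sd_index n d := {mo : 'X_{1..n < d.+1} | (mdeg mo == d)%N}.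
Local Notation m := (Sd_dim n d).

Lemma mnm_perm_bmdeg s (b : Sd_index n d) : (mdeg (mnm_perm s (val b)) < d.+1)%N.
Proof. by rewrite mdeg_mperm bmdeg. Qed.

Lemma mnm_perm_Sd_index s (b : Sd_index n d) :
  (mdeg (BMultinom (mnm_perm_bmdeg s b)) == d)%N.
Proof. by rewrite /= mdeg_mperm (valP b). Qed.

Definition Sd_perm s (a : 'I_m) : 'I_m :=
  enum_rank (exist (fun mo : 'X_{1..n < d.+1} => (mdeg mo == d)%N) _
    (mnm_perm_Sd_index s (enum_val a))).

Lemma Sd_monom_perm s a : Sd_monom (Sd_perm s a) = mnm_perm s (Sd_monom a).
Proof. by rewrite /Sd_monom /Sd_perm enum_rankK. Qed.

Lemma Sd_perm_inj s : injective (Sd_perm s).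
Proof.
move=> a b /(congr1 Sd_monom); rewrite !Sd_monom_perm => /mnmP eq_ab.
by apply: Sd_monom_inj; apply/mnmP => i; have := eq_ab (s i); rewrite !mnmE permK.
Qed.

Lemma elem_sym_linform_sym j :
  elem_sym (fun a : 'I_m => linform C (Sd_monom a)) j \is symmetric.
Proof.
apply/issymP => s; rewrite (rmorph_elem_sym (msym s)).
rewrite -[RHS](elem_sym_perm _ _ (@Sd_perm_inj s)).
apply: eq_bigr => h _; apply: eq_bigr => a _ /=.
by rewrite msym_linform Sd_monom_perm.
Qed.

Lemma linform_psum_Sd k : linform_psum C n d d k
  = power_sum (fun a : 'I_m => linform C (Sd_monom a)) k.
Proof.
rewrite /power_sum /Sd_monom.
rewrite -(big_enum_val (fun s : Sd_index n d => linform C (val s : 'X_{1..n}) ^+ k)) /=.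
rewrite /linform_psum (reindex_omap (val : Sd_index n d -> 'X_{1..n < d.+1}) insub).
  by apply: eq_big => [s|s _] //=; rewrite (valP s) valK eqxx.
by move=> b hb; rewrite insubT.
Qed.

End SymmetricPowerPermutation.

Theorem theorem1p1 (C : numClosedFieldType) (n d : nat) :
  (2 <= n)%N -> (1 <= d)%N ->
  forall p : {mpoly C[UT_dim n]},
    coeff_algebra (fun k => Sd_mx d (@UT_basis C n k)) p <-> sym_diag p.
Proof.
move=> _ d_gt0 p; rewrite /coeff_algebra lie_coeffs_UT.
set y := fun a : 'I_(Sd_dim n d) => linform C (Sd_monom a).
have E_subalg := alg_gen_subalg [tuple elem_sym y i.+1 | i < Sd_dim n d].
split.
- case=> P ->; rewrite comp_mpolyA.
  exists (P \mPo [tuple elem_sym y i.+1 | i < Sd_dim n d]); split => //.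
  apply: mcomp_sym => i; rewrite -tnth_nth tnth_mktuple.
  exact: elem_sym_linform_sym.
- case=> q [q_sym ->].
  have [P ->] : alg_gen [tuple elem_sym y i.+1 | i < Sd_dim n d] q.
    apply: (subalg_symmetric E_subalg) q_sym => k k_gt0.
    apply: (subalg_power_sumX E_subalg d_gt0) k_gt0 => j _.
    rewrite linform_psum_Sd; apply: (subalg_power_sum E_subalg).
    exact: alg_gen_elem_sym.
  by exists P; rewrite comp_mpolyA.
Qed.
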